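(* Let $t(n)=\frac{\log n}{\log\log n}$. No deterministic max-of-$t(n)$ online bipartite matching algorithm can achieve an asymptotic approximation ratio greater than $1/2$.
   Context: Online one-sided bipartite matching: offline vertices are known in advance; $n$ online vertices arrive one at a time in adversarial order, each with its set of offline neighbours, and the algorithm must irrevocably match it to an unmatched neighbour or leave it unmatched; the goal is a maximum-size matching. A max-of-$k$ algorithm runs $k$ deterministic online algorithms in parallel, producing $k$ matchings, and outputs the largest. The asymptotic approximation ratio of $\mathbb{A}$ is $\liminf_{n}\inf_{I\in\mathcal{I}_n} v(\mathbb{A},I)/v(I)$, with $v(I)$ the maximum matching size. *)

From HB Require Import structures.
From mathcomp Require Import all_boot all_order all_algebra.
From mathcomp Require Import all_classical all_reals all_analysis.
Set Implicit Arguments. Unset Strict Implicit. Unset Printing Implicit Defensive.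
Import Order.TTheory GRing.Theory Num.Theory.

(* An instance with n online vertices and m offline vertices 'I_m:
   the i-th online vertex (in arrival order) has neighbour set I`_i. *)
Definition instance (n m : nat) := n.-tuple {set 'I_m}.

(* A deterministic online algorithm (for offline vertex set 'I_m):
   given the neighbour sets of the previously arrived online vertices
   (its own past decisions are determined by these) and the neighbour
   set of the current online vertex, it proposes an offline vertex to
   match to, or None.  A proposal that is not an unmatched neighbour
   is treated as leaving the vertex unmatched. *)
Definition online_alg (m : nat) := seq {set 'I_m} -> {set 'I_m} -> option 'I_m.

Fixpoint run_alg (m : nat) (A : online_alg m) (past : seq {set 'I_m})
    (matched : {set 'I_m}) (future : seq {set 'I_m}) : nat :=
  match future with
  | [::] => 0
  | N :: rest =>
      match A past N with
      | Some v =>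
          if (v \in N) && (v \notin matched)
          then (run_alg A (rcons past N) (v |: matched) rest).+1
          else run_alg A (rcons past N) matched rest
      | None => run_alg A (rcons past N) matched rest
      end
  end.

Definition alg_value (n m : nat) (A : online_alg m) (I : instance n m) : nat :=
  run_alg A [::] finset.set0 I.

Definition is_matching (n m : nat) (I : instance n m) (f : {ffun 'I_n -> option 'I_m}) : bool :=
  [forall i, if f i is Some v then v \in tnth I i else true] &&
  [forall i, forall j, (f i != None) && (f i == f j) ==> (i == j)].

Definition matching_size (n m : nat) (f : {ffun 'I_n -> option 'I_m}) : nat :=
  #|[set i | f i != None]|.

Definition opt_value (n m : nat) (I : instance n m) : nat :=
  \max_(f : {ffun 'I_n -> option 'I_m} | is_matching I f) matching_size f.

Definition maxk_value (n m k : nat) (As : k.-tuple (online_alg m)) (I : instance n m) : nat :=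
  \max_(A <- As) alg_value A I.

Definition maxk_family (k : nat -> nat) := forall n m : nat, (k n).-tuple (online_alg m).

Local Open Scope ring_scope.
Local Open Scope ereal_scope.

Definition worst_ratio (R : realType) (k : nat -> nat) (F : maxk_family k) (n : nat) : \bar R :=
  ereal_inf [set x | exists m (I : instance n m),
     (0 < opt_value I)%N /\
     x = ((maxk_value (F n m) I)%:R / (opt_value I)%:R : R)%:E].

Definition asymp_ratio (R : realType) (k : nat -> nat) (F : maxk_family k) : \bar R :=
  limn_einf (worst_ratio R F).

Definition tfun (R : realType) (n : nat) : R := ln (n%:R) / ln (ln (n%:R)).

From HB Require Import structures.
From mathcomp Require Import all_boot all_order all_algebra.
From mathcomp Require Import zify.
Set Implicit Arguments. Unset Strict Implicit. Unset Printing Implicit Defensive.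

(* Given k deterministic algorithms, the adversary labels each offline vertex
   with its profile: the set of algorithms that have matched it.  While some
   class of unreserved vertices of equal profile has more than k elements, the
   next online vertex is adjacent to exactly that class.  Each algorithm
   matches at most one of them, so some vertex r of the class keeps its
   profile; r is reserved for the optimal matching.  If algorithm j matches a
   new vertex v in this round, then j is not in the common profile, so r is a
   fresh vertex not matched by j: every algorithm matches at most half of the
   m offline vertices.  Once all classes have at most k elements, at most
   k 2^k vertices are unreserved, so the optimum is at least m - k 2^k.  With
   m = n - 1 and k <= log n / log log n we get k 2^k <= e^(2k) <= sqrt n, which
   is o(n), so the worst ratio tends to 1/2. *)

Lemma leq_card_bigcup (I T : finType) (P : pred I) (F : I -> {set T}) :
  #|\bigcup_(i | P i) F i| <= \sum_(i | P i) #|F i|.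
Proof.
elim/big_ind2: _ => [|n1 A1 n2 A2 le1 le2|//]; first by rewrite cards0.
by rewrite (leq_trans (leq_card_setU A1 A2).1) ?leq_add.
Qed.

Section OnlineRun.
Variable m : nat.
Implicit Types (A : online_alg m) (p : seq {set 'I_m}) (N M : {set 'I_m}).

Definition matched_after A p N M : {set 'I_m} :=
  match A p N with
  | Some v => if (v \in N) && (v \notin M) then v |: M else M
  | None => M
  end.

Lemma matched_afterP A p N M : matched_after A p N M = M \/
  exists v, [/\ v \in N, v \notin M & matched_after A p N M = v |: M].
Proof.
rewrite /matched_after; case: (A p N) => [v|]; last by left.
by case: ifP => [/andP[vN vM]|_]; [right; exists v | left].
Qed.

Lemma matched_after_sub A p N M : M \subset matched_after A p N M.
Proof. by case: (matched_afterP A p N M) => [->|[v [_ _ ->]]]; rewrite ?subsetUr. Qed.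

Lemma card_matched_after_new A p N M : #|matched_after A p N M :\: M| <= 1.
Proof.
case: (matched_afterP A p N M) => [->|[v [_ _ ->]]]; first by rewrite setDv cards0.
by rewrite setDUl setDv setU0 (leq_trans (subset_leq_card (subsetDl _ _))) ?cards1.
Qed.

Lemma matched_after0 A p M : matched_after A p set0 M = M.
Proof. by case: (matched_afterP A p set0 M) => [//|[v []]]; rewrite inE. Qed.

Lemma run_alg_cons A p M N r :
  run_alg A p M (N :: r) + #|M| =
  run_alg A (rcons p N) (matched_after A p N M) r + #|matched_after A p N M|.
Proof.
rewrite /matched_after /=; case: (A p N) => [v|] //.
by case: ifP => // /andP[_ vM]; rewrite cardsU1 vM addSnnS.
Qed.

End OnlineRun.

Section Adversary.
Variables (m k : nat) (As : k.-tuple (online_alg m)).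

Record adv_state := AdvState {
  history : seq {set 'I_m};
  matched : {ffun 'I_k -> {set 'I_m}};
  reserved : {set 'I_m} }.

Implicit Types (s : adv_state) (P : {set 'I_k}).

Definition profile (M : {ffun 'I_k -> {set 'I_m}}) (v : 'I_m) : {set 'I_k} :=
  [set j | v \in M j].

Definition profile_class s P :=
  [set v | (v \notin reserved s) && (profile (matched s) v == P)].

Definition exhausted s := [forall P, #|profile_class s P| <= k].

Definition adv_neighbours s :=
  if [pick P | k < #|profile_class s P|] is Some P then profile_class s P else set0.

Definition matched_next s :=
  [ffun j => matched_after (tnth As j) (history s) (adv_neighbours s) (matched s j)].

Definition reserve s :=
  [pick v in adv_neighbours s | profile (matched_next s) v == profile (matched s) v].

Definition adv_step s :=
  AdvState (rcons (history s) (adv_neighbours s)) (matched_next s)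
    (if reserve s is Some v then v |: reserved s else reserved s).

Fixpoint adv_arrivals t s :=
  if t is t'.+1 then adv_neighbours s :: adv_arrivals t' (adv_step s) else [::].

Definition adv_start := AdvState [::] [ffun => set0] set0.

Lemma run_alg_adv_arrivals t s j :
  run_alg (tnth As j) (history s) (matched s j) (adv_arrivals t s) + #|matched s j|
  = #|matched (iter t adv_step s) j|.
Proof.
elim: t s => [|t IHt] s; first by rewrite /= add0n.
by rewrite iterSr -IHt /= run_alg_cons ffunE.
Qed.

Lemma size_adv_arrivals t s : size (adv_arrivals t s) = t.
Proof. by elim: t s => [|t IHt] s //=; rewrite IHt. Qed.

Lemma nth_adv_arrivals t s i d :
  i < t -> nth d (adv_arrivals t s) i = adv_neighbours (iter i adv_step s).
Proof. by elim: t s i => [|t IHt] s [|i] //= lt_it; rewrite IHt // -iterSr. Qed.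

Lemma adv_neighbours_unreserved s v : v \in adv_neighbours s -> v \notin reserved s.
Proof.
by rewrite /adv_neighbours; case: pickP => [P _|_]; rewrite inE // => /andP[].
Qed.

Lemma card_profile_changed s :
  #|[set v | profile (matched_next s) v != profile (matched s) v]| <= k.
Proof.
set news := fun j => matched_next s j :\: matched s j.
have sub_news : [set v | profile (matched_next s) v != profile (matched s) v]
    \subset \bigcup_(j | true) news j.
  apply/subsetP => v; rewrite inE => changed; apply/bigcupP.
  have /existsP[j /andP[vM_next vM]] :
      [exists j, (v \in matched_next s j) && (v \notin matched s j)].
    apply: contraNT changed => /existsPn unchanged; apply/eqP/setP => j.
    rewrite !inE /matched_next ffunE; have := unchanged j; rewrite /matched_next ffunE.
    have /subsetP/(_ v) := matched_after_sub (tnth As j) (history s)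
      (adv_neighbours s) (matched s j).
    by case: (v \in matched s j) => [->|_] //; rewrite andbT => /negbTE.
  by exists j; rewrite // /news inE vM.
rewrite (leq_trans (subset_leq_card sub_news)) ?(leq_trans (leq_card_bigcup _ _)) //.
rewrite -[X in _ <= X]card_ord -sum1_card leq_sum // => j _.
by rewrite /news ffunE card_matched_after_new.
Qed.

Lemma exhausted_neighbours s : exhausted s -> adv_neighbours s = set0.
Proof.
move/forallP=> small; rewrite /adv_neighbours; case: pickP => [P|//].
by rewrite ltnNge small.
Qed.

Lemma exhausted_step s :
  exhausted s -> adv_step s = AdvState (rcons (history s) set0) (matched s) (reserved s).
Proof.
move=> ex_s; have reserve0 : reserve s = None.
  by rewrite /reserve exhausted_neighbours //; case: pickP => // v /andP[]; rewrite inE.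
rewrite /adv_step reserve0 exhausted_neighbours //; congr AdvState.
by apply/ffunP => j; rewrite ffunE exhausted_neighbours // matched_after0.
Qed.

Lemma exhausted_adv_step s : exhausted s -> exhausted (adv_step s).
Proof. by move=> ex_s; rewrite exhausted_step. Qed.

Lemma reserve_unchanged s : ~~ exhausted s -> exists P v,
  [/\ adv_neighbours s = profile_class s P, reserve s = Some v,
      v \in profile_class s P & profile (matched_next s) v = profile (matched s) v].
Proof.
move=> /forallPn[P0]; rewrite -ltnNge => big_P0.
have [P big_P N_P] :
    exists2 P, k < #|profile_class s P| & adv_neighbours s = profile_class s P.
  rewrite /adv_neighbours; case: pickP => [P big_P|/(_ P0)]; last by rewrite big_P0.
  by exists P.
exists P; rewrite /reserve N_P; case: pickP => [v /andP[vP /eqP same]|none].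
  by exists v.
have : profile_class s P \subset
    [set v | profile (matched_next s) v != profile (matched s) v].
  by apply/subsetP => v vP; rewrite inE; have := none v; rewrite vP => /negbT.
by move/subset_leq_card/(leq_trans big_P); rewrite ltnNge card_profile_changed.
Qed.

Lemma reserve_spec s v : reserve s = Some v ->
  [/\ v \in adv_neighbours s, v \notin reserved s & reserved (adv_step s) = v |: reserved s].
Proof.
move=> rv; have vN : v \in adv_neighbours s.
  by move: rv; rewrite /reserve; case: pickP => // w /andP[wN _] [<-].
by rewrite vN adv_neighbours_unreserved // /adv_step rv.
Qed.

Lemma card_reserved_step s : #|reserved (adv_step s)| = (reserve s != None) + #|reserved s|.
Proof.
case rv: (reserve s) => [v|]; last by rewrite /adv_step rv.
by have [_ vU ->] := reserve_spec rv; rewrite cardsU1 vU.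
Qed.

Lemma reserved_step_sub s : reserved s \subset reserved (adv_step s).
Proof.
case rv: (reserve s) => [v|]; last by rewrite /adv_step rv.
by have [_ _ ->] := reserve_spec rv; apply: subsetUr.
Qed.

Definition half_matched s := forall j, 2 * #|matched s j| <= #|reserved s :|: matched s j|.

Lemma half_matched_step s : half_matched s -> half_matched (adv_step s).
Proof.
move=> half_s j; have := half_s j.
have [ex_s|/reserve_unchanged[P [r [N_P rv rP same]]]] := boolP (exhausted s).
  by rewrite exhausted_step.
have next_j : matched_next s j =
    matched_after (tnth As j) (history s) (adv_neighbours s) (matched s j).
  by rewrite ffunE.
rewrite /adv_step rv /= next_j.
case: (matched_afterP (tnth As j) (history s) (adv_neighbours s) (matched s j))
  => [-> | [v [vN vM after_v]]].
  by move/leq_trans; apply; apply/subset_leq_card/setSU/subsetUr.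
rewrite after_v; move: rP vN; rewrite N_P !inE => /andP[rU /eqP rP] /andP[vU /eqP vP].
have jP : j \notin P by rewrite -vP inE.
have rM : r \notin matched s j by apply: contra jP => rM; rewrite -rP inE.
have r_v : r != v.
  by apply: contra jP => /eqP r_v; rewrite -rP -same inE next_j after_v r_v setU11.
rewrite -setUA [reserved s :|: (_ |: _)]setUCA !cardsU1 !inE.
rewrite (negbTE r_v) (negbTE rU) (negbTE rM) (negbTE vU) (negbTE vM) /=; lia.
Qed.

Local Notation adv_state_at t := (iter t adv_step adv_start).

Lemma half_matched_at t : half_matched (adv_state_at t).
Proof.
elim: t => [j|t IHt]; [by rewrite ffunE cards0 | exact: half_matched_step].
Qed.

Lemma card_reserved_at t :
  #|reserved (adv_state_at t)| = \sum_(i < t) (reserve (adv_state_at i) != None).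
Proof.
elim: t => [|t IHt]; first by rewrite big_ord0 cards0.
by rewrite big_ord_recr /= card_reserved_step IHt addnC.
Qed.

Lemma exhausted_or_card_reserved t :
  exhausted (adv_state_at t) \/ #|reserved (adv_state_at t)| = t.
Proof.
elim: t => [|t [ex_t|card_t]]; first by right; rewrite cards0.
  by left; exact: exhausted_adv_step.
have [ex_t|/reserve_unchanged[P [v [_ rv _ _]]]] := boolP (exhausted (adv_state_at t)).
  by left; exact: exhausted_adv_step.
by right; rewrite /= card_reserved_step rv card_t.
Qed.

Lemma exhausted_at n : m < n -> exhausted (adv_state_at n).
Proof.
case: (exhausted_or_card_reserved n) => // card_n.
by have := max_card (reserved (adv_state_at n)); rewrite card_ord card_n leqNgt => /negbTE->.
Qed.

Lemma reserve_at_inj i j v :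
  reserve (adv_state_at i) = Some v -> reserve (adv_state_at j) = Some v -> i = j.
Proof.
wlog lt_ij : i j / i < j.
  move=> wlog_ij ri rj; case: (ltngtP i j) => [lt_ij|lt_ji|//].
    exact: wlog_ij ri rj.
  exact/esym/(wlog_ij j i).
move=> ri rj; have [_ vU _] := reserve_spec rj.
have mono : {homo (fun t => reserved (adv_state_at t)) : a b / a <= b >-> a \subset b}.
  apply: homo_leq => [A|A B C|t]; [exact: subxx|exact: subset_trans|].
  exact: reserved_step_sub.
have /subsetP/(_ v) := mono _ _ lt_ij.
by rewrite /= ri setU11 (negbTE vU) => /(_ isT).
Qed.

Lemma card_unreserved_exhausted s : exhausted s -> #|~: reserved s| <= k * 2 ^ k.
Proof.
move=> /forallP small.
have sub_classes : ~: reserved s \subset \bigcup_(P | true) profile_class s P.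
  apply/subsetP => v; rewrite inE => vU; apply/bigcupP.
  by exists (profile (matched s) v); rewrite // inE vU eqxx.
rewrite (leq_trans (subset_leq_card sub_classes)) ?(leq_trans (leq_card_bigcup _ _)) //.
rewrite (leq_trans (leq_sum _ (fun P _ => small P))) // sum_nat_const.
by rewrite -cardsT -powersetT card_powerset cardsT card_ord mulnC.
Qed.

Definition adv_instance n : instance n m :=
  Tuple (introT eqP (size_adv_arrivals n adv_start)).

Lemma alg_value_adv_instance n j :
  alg_value (tnth As j) (adv_instance n) = #|matched (adv_state_at n) j|.
Proof. by rewrite /alg_value -run_alg_adv_arrivals /= ffunE cards0 addn0. Qed.

Lemma maxk_value_adv_instance n : 2 * maxk_value As (adv_instance n) <= m.
Proof.
rewrite /maxk_value big_tuple; apply: (big_ind (fun x => 2 * x <= m)) => //.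
  by move=> a b; lia.
move=> j _; rewrite alg_value_adv_instance (leq_trans (half_matched_at n j)) //.
by rewrite (leq_trans (max_card _)) ?card_ord.
Qed.

Definition reserve_matching n : {ffun 'I_n -> option 'I_m} :=
  [ffun t : 'I_n => reserve (adv_state_at t)].

Lemma is_matching_reserve n : is_matching (adv_instance n) (reserve_matching n).
Proof.
apply/andP; split.
  apply/forallP => t; rewrite ffunE (tnth_nth set0) nth_adv_arrivals //.
  by case rv: (reserve _) => [v|] //; have [] := reserve_spec rv.
apply/forallP => i; apply/forallP => j; apply/implyP => /andP[]; rewrite !ffunE.
by case ri: (reserve _) => [v|] // _ /eqP/esym rj; apply/eqP/val_inj/(reserve_at_inj ri).
Qed.

Lemma matching_size_reserve n :
  matching_size (reserve_matching n) = #|reserved (adv_state_at n)|.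
Proof.
rewrite card_reserved_at /matching_size -sum1_card big_mkcond /=.
by apply: eq_bigr => t _; rewrite inE ffunE; case: (reserve _).
Qed.

Lemma adversary_bound n : m < n ->
  2 * maxk_value As (adv_instance n) <= m /\ m <= opt_value (adv_instance n) + k * 2 ^ k.
Proof.
move=> lt_mn; split; first exact: maxk_value_adv_instance.
have opt_ge : #|reserved (adv_state_at n)| <= opt_value (adv_instance n).
  by rewrite -matching_size_reserve; apply: leq_bigmax_cond; exact: is_matching_reserve.
have := cardsC (reserved (adv_state_at n)); rewrite card_ord.
have := card_unreserved_exhausted (exhausted_at lt_mn); lia.
Qed.

End Adversary.

From mathcomp Require Import all_classical all_reals all_analysis.
From mathcomp Require Import lra.
Import Order.TTheory GRing.Theory Num.Theory.
Local Open Scope ring_scope.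
Local Open Scope classical_set_scope.

Lemma limn_einf_le_near (R : realType) (u : (\bar R)^nat) (a : \bar R) :
  (\forall n \near \oo, (u n <= a)%E) -> (limn_einf u <= a)%E.
Proof.
move=> ua; rewrite limn_einf_lim; apply: lime_le; first exact: is_cvg_einfs.
by apply: filterS ua => n; apply: le_trans; apply: ereal_inf_lbound; exists n => /=.
Qed.

Lemma natr_mul_exp2_le_expR (R : realType) (k : nat) :
  (k * 2 ^ k)%:R <= expR (2 * k%:R) :> R.
Proof.
have k_le : k%:R <= expR k%:R :> R by have := expR_ge1Dx (k%:R : R); lra.
have exp2_le : (2 ^ k)%:R <= expR k%:R :> R.
  rewrite natrX -[k%:R]mulr1 expRM_natl lerXn2r ?nnegrE ?expR_ge0 //.
  by have := expR_ge1Dx (1 : R); lra.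
rewrite natrM (_ : 2 * k%:R = k%:R + k%:R) ?expRD; last lra.
by rewrite ler_pM ?ler0n.
Qed.

Lemma expR_le_of_le_tfun (R : realType) (x y : R) :
  expR (expR 4) <= x -> y <= ln x / ln (ln x) -> expR (4 * y) <= x.
Proof.
move=> x_ge y_le; have x_gt0 : 0 < x by apply: lt_le_trans x_ge; exact: expR_gt0.
have lnx_ge : expR 4 <= ln x by rewrite -ler_expR lnK.
have lnx_gt0 : 0 < ln x by apply: lt_le_trans lnx_ge; exact: expR_gt0.
have lnlnx_ge : 4 <= ln (ln x) by rewrite -ler_expR lnK.
have : 4 * y <= ln x.
  rewrite ler_pdivlMr in y_le; last lra.
  by have [y_le0|y_ge0] := lerP y 0; nra.
by rewrite -ler_expR lnK.
Qed.

Lemma le_mul_subr1_of_sqr_le (R : realFieldType) (c x b : R) :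
  0 < c -> 2 <= x -> 4 <= c ^+ 2 * x -> 0 <= b -> b ^+ 2 <= x -> b <= c * (x - 1).
Proof.
move=> c_gt0 x_ge2 cx_ge4 b_ge0 b2_le.
have x_le : x <= (c * x / 2) ^+ 2 by nra.
have : b ^+ 2 <= (c * x / 2) ^+ 2 by apply: le_trans x_le.
rewrite ler_pXn2r ?nnegrE // => [b_le|]; nra.
Qed.

Lemma overhead_negligible (R : realType) (k : nat -> nat) (c : R) : 0 < c ->
  (\forall n \near \oo, (k n)%:R <= tfun R n) ->
  \forall n \near \oo, (k n * 2 ^ k n)%:R <= c * (n.-1)%:R.
Proof.
move=> c_gt0 k_le; near=> n.
have k_le_n : (k n)%:R <= tfun R n by near: n.
have n_ge2 : 2 <= n%:R :> R by near: n; exact: nbhs_infty_ger.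
have n_ge_c : 4 <= c ^+ 2 * n%:R.
  by rewrite -ler_pdivrMl ?exprn_gt0 //; near: n; exact: nbhs_infty_ger.
have n_ge_e4 : expR (expR 4) <= n%:R :> R by near: n; exact: nbhs_infty_ger.
have n_pos : (0 < n)%N by rewrite -(ltr_nat R); lra.
rewrite -subn1 natrB // le_mul_subr1_of_sqr_le ?ler0n //.
apply: le_trans (expR_le_of_le_tfun (y := (k n)%:R) n_ge_e4 k_le_n).
rewrite (_ : 4 * _ = 2 * (2 * (k n)%:R)); last lra.
by rewrite expRM_natl lerXn2r ?nnegrE ?ler0n ?expR_ge0 // natr_mul_exp2_le_expR.
Unshelve. all: by end_near.
Qed.

Lemma worst_ratio_le (R : realType) (k : nat -> nat) (F : maxk_family k) (n : nat) (e : R) :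
  0 < e -> (1 < n)%N -> (k n * 2 ^ k n)%:R <= e / (2^-1 + e) * (n.-1)%:R ->
  (worst_ratio R F n <= (2^-1 + e)%:E)%E.
Proof.
move=> e_gt0 n_gt1 small.
set I := adv_instance (F n n.-1) n.
have [alg_le opt_ge] : (2 * maxk_value (F n n.-1) I <= n.-1 /\
    n.-1 <= opt_value I + k n * 2 ^ k n)%N.
  by apply: adversary_bound; rewrite ltn_predL; apply: ltnW.
move: alg_le opt_ge; rewrite -!(ler_nat R) natrM natrD.
set a : R := (maxk_value _ _)%:R; set o : R := (opt_value _)%:R.
set M : R := (n.-1)%:R; set B : R := (k n * _)%:R in small * => alg_le opt_ge.
have M_ge1 : 1 <= M by rewrite /M ler1n -ltnS prednK // ltnW.
rewrite mulrAC ler_pdivlMr in small; last lra.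
have half_le : M / 2 <= (2^-1 + e) * o by nra.
have o_gt0 : 0 < o by nra.
apply: (@le_trans _ _ (a / o)%:E).
  by apply: ereal_inf_lbound; exists n.-1, I; split; rewrite // -(ltr_nat R).
by rewrite lee_fin ler_pdivrMr // mulrC; lra.
Qed.

Theorem corollary1 (R : realType) (k : nat -> nat) (F : maxk_family k) :
  (exists N : nat, forall n : nat, (N <= n)%N -> ((k n)%:R <= tfun R n)) ->
  (asymp_ratio R F <= (2^-1 : R)%:E)%E.
Proof.
move=> [N k_le]; apply/lee_addgt0Pr => e e_gt0; apply: limn_einf_le_near.
have k_le_near : \forall n \near \oo, (k n)%:R <= tfun R n by exists N.
have c_gt0 : 0 < e / (2^-1 + e) by rewrite divr_gt0 //; lra.
have small := overhead_negligible c_gt0 k_le_near.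
near=> n; rewrite -EFinD; apply: worst_ratio_le => //; last by near: n.
by near: n; exact: nbhs_infty_gt.
Unshelve. all: by end_near.
Qed.
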